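(* For every $n \geq 1$ we have $$\mathrm{OW}_n(\mathbb{C}) \subseteq \mathrm{SODECO}_n(\mathbb{C}) \subseteq \overline{\mathrm{OW}_n(\mathbb{C})},$$ and both inclusions are strict for every $n \geq 2$.
   Context: Identify a symmetric tensor $S\in\mathbb{C}^{n\times n\times n}$ with the cubic form $f(x)=\sum_{i,j,k}S_{ijk}x_ix_jx_k\in\mathbb{C}[x_1,\dots,x_n]_3$ (homogeneous polynomials of degree 3). A matrix $A\in M_n(\mathbb{C})$ is orthogonal if $A^TA=\mathrm{Id}_n$. $\mathrm{OW}_n(\mathbb{C})$ is the set of $f\in\mathbb{C}[x_1,\dots,x_n]_3$ that can be written $f(x)=g(Ax)$ with $A$ a complex orthogonal matrix and $g=\alpha_1x_1^3+\cdots+\alpha_nx_n^3$, $\alpha_i\in\mathbb{C}$. On $\mathbb{C}^n$ use the bilinear (non-Hermitian) form $\langle x,y\rangle=\sum_i x_iy_i$; ''orthogonal'' vectors means $\langle u,v\rangle=0$. $\mathrm{SODECO}_n(\mathbb{C})$ is the set of symmetric tensors (equivalently cubic forms) that can be written $\sum_{i=1}^k v_i^{\otimes 3}$ where $v_1,\dots,v_k\in\mathbb{C}^n$ are linearly independent and pairwise orthogonal. The closure $\overline{\mathrm{OW}_n(\mathbb{C})}$ is taken in the usual (Euclidean) topology of $\mathbb{C}[x_1,\dots,x_n]_3$. *)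

(* The complex field is modelled by an arbitrary
   numClosedFieldType C. *)
From HB Require Import structures.
From mathcomp Require Import all_boot all_order all_algebra.
Set Implicit Arguments. Unset Strict Implicit. Unset Printing Implicit Defensive.
Import Order.TTheory GRing.Theory Num.Theory.
Local Open Scope ring_scope.

Definition tensor3 (C : Type) (n : nat) := 'I_n -> 'I_n -> 'I_n -> C.

Definition sym_tensor (C : Type) (n : nat) (S : tensor3 C n) : Prop :=
  forall i j k, S i j k = S j i k /\ S i j k = S i k j.

Definition cubic_form (C : numClosedFieldType) (n : nat) (S : tensor3 C n)
    (x : 'cV[C]_n) : C :=
  \sum_(i < n) \sum_(j < n) \sum_(k < n) S i j k * x i 0 * x j 0 * x k 0.

Definition orthogonal_mx (C : numClosedFieldType) (n : nat) (A : 'M[C]_n) : Prop :=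
  A^T *m A = 1%:M.

Definition OW (C : numClosedFieldType) (n : nat) (S : tensor3 C n) : Prop :=
  sym_tensor S /\
  exists (A : 'M[C]_n) (alpha : 'I_n -> C),
    orthogonal_mx A /\
    forall x : 'cV[C]_n,
      cubic_form S x = \sum_(i < n) alpha i * ((A *m x) i 0) ^+ 3.

(* Bilinear (non-Hermitian) form <u,v> = sum_i u_i v_i. *)
Definition bil (C : numClosedFieldType) (n : nat) (u v : 'rV[C]_n) : C :=
  \sum_(i < n) u 0 i * v 0 i.

Definition SODECO (C : numClosedFieldType) (n : nat) (S : tensor3 C n) : Prop :=
  exists (k : nat) (V : 'M[C]_(k, n)),
    row_free V /\
    (forall i j : 'I_k, i != j -> bil (row i V) (row j V) = 0) /\
    forall a b c : 'I_n, S a b c = \sum_(i < k) V i a * V i b * V i c.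

(* Closure in the Euclidean topology of the finite-dimensional space of
   tensors (max-norm on entries). *)
Definition eclosure (C : numClosedFieldType) (n : nat) (P : tensor3 C n -> Prop)
    (S : tensor3 C n) : Prop :=
  forall eps : C, 0 < eps ->
    exists T : tensor3 C n, P T /\ forall a b c, `|S a b c - T a b c| < eps.

(* The two definitions are compared through sums of cubes
   cubes V mu = sum_i mu_i v_i^(x)3 of the rows v_i of a matrix V.
   - By polarization a symmetric tensor is determined by its cubic form, so OW
     consists of the tensors cubes A alpha with A orthogonal (OW_cubesP).
   - Orthonormal families extend to orthogonal matrices; hence combinations of
     cubes of pairwise orthogonal non-isotropic vectors lie in OW
     (OW_orthogonal_rows).  This gives OW <= SODECO after taking cube roots of
     the coefficients, and SODECO <= closure(OW) after a perturbation V + t Z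
     that makes the isotropic rows non-isotropic while keeping all rows
     orthogonal (isotropic_correction); the perturbed tensors depend
     polynomially on t (eclosure_poly_path).
   - Strictness is detected by the contraction phi_a = sum_b S_abb: an OW tensor
     with phi = 0 vanishes, and a SODECO tensor with S(phi, ., phi) = 0 has
     phi = 0.  The cube of an isotropic vector w, and the symmetrization of
     w (x) w (x) u with u isotropic and <w, u> != 0, violate these properties
     while lying in SODECO, resp. in closure(OW). *)

From HB Require Import structures.
From mathcomp Require Import all_boot all_order all_algebra.
From mathcomp Require Import ring zify.
Import Order.TTheory GRing.Theory Num.Theory.
Set Implicit Arguments. Unset Strict Implicit. Unset Printing Implicit Defensive.
Local Open Scope ring_scope.

Lemma ler_sum_term (R : numDomainType) (I : finType) (F : I -> R) i :
  (forall j, 0 <= F j) -> F i <= \sum_j F j.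
Proof. by move=> F_ge0; rewrite (bigD1 i) //= lerDl sumr_ge0. Qed.

Lemma small_factor (R : numFieldType) (eps K : R) : 0 < eps -> 0 <= K ->
  exists t : R, [/\ 0 < t, t <= 1 & t * K < eps].
Proof.
move=> eps_gt0 K_ge0; set D := eps + K + 1.
have D_gt0 : 0 < D by rewrite /D -addrA ltr_wpDr // addr_ge0.
exists (eps / D); split.
- by rewrite divr_gt0.
- by rewrite ler_pdivrMr // mul1r /D -addrA lerDl addr_ge0.
- rewrite mulrAC ltr_pdivrMr // ltr_pM2l // /D -addrA [K + 1]addrC addrA addrC.
  by rewrite ltrDl addr_gt0 ?ltr01.
Qed.

Definition coef_norm (R : numDomainType) (p : {poly R}) : R :=
  \sum_(i < size p) `|p`_i|.

Lemma coef_norm_ge0 (R : numDomainType) (p : {poly R}) : 0 <= coef_norm p.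
Proof. exact: sumr_ge0. Qed.

Lemma horner_norm_le (R : numDomainType) (p : {poly R}) t :
  `|t| <= 1 -> `|p.[t]| <= coef_norm p.
Proof.
move=> t_le1; rewrite horner_coef; apply: le_trans (ler_norm_sum _ _ _) _.
by apply: ler_sum => i _; rewrite normrM normrX ler_piMr ?exprn_ile1.
Qed.

Lemma horner_sub0 (R : comNzRingType) (p : {poly R}) t :
  p.[t] - p.[0] = (drop_poly 1 p).[t] * t.
Proof.
have take1 : take_poly 1 p = (p`_0)%:P.
  by apply/polyP => -[|i]; rewrite coef_take_poly coefC.
rewrite -{1}(poly_take_drop 1 p) take1 hornerD hornerMX hornerC horner_coef0.
by rewrite addrAC subrr add0r.
Qed.

Lemma cube_sum (R : pzSemiRingType) n (u : 'I_n -> R) :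
  (\sum_(a < n) u a) ^+ 3 = \sum_(a < n) \sum_(b < n) \sum_(c < n) u a * u b * u c.
Proof.
rewrite exprS expr2 mulr_suml; apply: eq_bigr => a _.
rewrite mulr_suml mulr_sumr; apply: eq_bigr => b _.
by rewrite mulrA mulr_sumr.
Qed.

Section OrthogonalDecompositions.

Variable C : numClosedFieldType.

Lemma bil_mx n (u v : 'rV[C]_n) : bil u v = (u *m v^T) 0 0.
Proof. by rewrite mxE; apply: eq_bigr => a _; rewrite mxE. Qed.

Lemma bilC n (u v : 'rV[C]_n) : bil u v = bil v u.
Proof. by apply: eq_bigr => a _; rewrite mulrC. Qed.

Lemma bilDl n (u v w : 'rV[C]_n) : bil (u + v) w = bil u w + bil v w.
Proof. by rewrite /bil -big_split; apply: eq_bigr => a _; rewrite mxE mulrDl. Qed.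

Lemma bilZl n c (u v : 'rV[C]_n) : bil (c *: u) v = c * bil u v.
Proof. by rewrite /bil mulr_sumr; apply: eq_bigr => a _; rewrite mxE mulrA. Qed.

Lemma bilDr n (u v w : 'rV[C]_n) : bil u (v + w) = bil u v + bil u w.
Proof. by rewrite bilC bilDl !(bilC u). Qed.

Lemma bilZr n c (u v : 'rV[C]_n) : bil u (c *: v) = c * bil u v.
Proof. by rewrite bilC bilZl bilC. Qed.

Lemma bil_delta n (a b : 'I_n) :
  bil (delta_mx 0 a) (delta_mx 0 b) = (a == b)%:R :> C.
Proof.
rewrite bil_mx trmx_delta; case: eqVneq => [->|ab].
  by rewrite mul_delta_mx mxE.
by rewrite mul_delta_mx_0 // mxE.
Qed.

Lemma bil_row k n (V : 'M[C]_(k, n)) i j : bil (row i V) (row j V) = (V *m V^T) i j.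
Proof. by rewrite mxE; apply: eq_bigr => a _; rewrite !mxE. Qed.

Definition trilinear n (D : tensor3 C n) (x y z : 'cV[C]_n) : C :=
  \sum_(i < n) \sum_(j < n) \sum_(k < n) D i j k * x i 0 * y j 0 * z k 0.

Lemma cubic_form_polarization n (D : tensor3 C n) x y z :
  cubic_form D (x + y + z) - cubic_form D (x + y) - cubic_form D (x + z)
  - cubic_form D (y + z) + cubic_form D x + cubic_form D y + cubic_form D z
  = trilinear D x y z + trilinear D x z y + trilinear D y x z
  + trilinear D y z x + trilinear D z x y + trilinear D z y x.
Proof.
rewrite /cubic_form /trilinear.
do 3 (rewrite -!sumrB -!big_split; apply: eq_bigr => ? _).
by rewrite /= !mxE; ring.
Qed.

Lemma sum_delta n (F : 'I_n -> C) a : \sum_(i < n) F i * (delta_mx a 0 : 'cV_n) i 0 = F a.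
Proof.
rewrite (bigD1 a) //= big1 => [|i ia]; first by rewrite mxE eqxx mulr1 addr0.
by rewrite mxE (negbTE ia) mulr0.
Qed.

Lemma trilinear_delta n (D : tensor3 C n) a b c :
  trilinear D (delta_mx a 0) (delta_mx b 0) (delta_mx c 0) = D a b c.
Proof.
rewrite /trilinear -[RHS](sum_delta (fun i => D i b c)).
apply: eq_bigr => i _; rewrite -(sum_delta (fun j => D i j c * _)).
by apply: eq_bigr => j _; rewrite sum_delta.
Qed.

(* A symmetric tensor with vanishing cubic form is zero: polarization at
   basis vectors gives 6 D_abc = 0 (characteristic 0). *)
Lemma sym_cubic_form_eq0 n (D : tensor3 C n) : sym_tensor D ->
  (forall x, cubic_form D x = 0) -> forall a b c, D a b c = 0.
Proof.
move=> symD D0 a b c.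
have := cubic_form_polarization D (delta_mx a 0) (delta_mx b 0) (delta_mx c 0).
rewrite !D0 !trilinear_delta -(proj2 (symD c a b)) -(proj1 (symD a c b)).
rewrite -(proj2 (symD a b c)) -(proj2 (symD b a c)) -(proj1 (symD a b c)).
have -> : 0 - 0 - 0 - 0 + 0 + 0 + 0 = 0 :> C by rewrite !subr0 !addr0.
have -> : D a b c + D a b c + D a b c + D a b c + D a b c + D a b c = 6%:R * D a b c.
  by rewrite -[6%N]/(1 + 1 + 1 + 1 + 1 + 1)%N !natrD; ring.
by move/esym/eqP; rewrite mulf_eq0 pnatr_eq0 => /eqP.
Qed.

Lemma cubic_formB n (S T : tensor3 C n) x :
  cubic_form (fun a b c => S a b c - T a b c) x = cubic_form S x - cubic_form T x.
Proof.
rewrite /cubic_form; do 3 (rewrite -sumrB; apply: eq_bigr => ? _).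
by rewrite !mulrBl.
Qed.

Lemma sym_tensor_cubic_form_inj n (S T : tensor3 C n) :
  sym_tensor S -> sym_tensor T -> (forall x, cubic_form S x = cubic_form T x) ->
  forall a b c, S a b c = T a b c.
Proof.
move=> symS symT ST a b c; apply/eqP; rewrite -subr_eq0; apply/eqP.
apply: (@sym_cubic_form_eq0 _ (fun a b c => S a b c - T a b c)) => [i j k|x].
  by have [-> ->] := symS i j k; have [-> ->] := symT i j k.
by rewrite cubic_formB ST subrr.
Qed.

Definition cubes k n (V : 'M[C]_(k, n)) (mu : 'I_k -> C) : tensor3 C n :=
  fun a b c => \sum_(i < k) mu i * V i a * V i b * V i c.

Lemma cubes_sym k n (V : 'M[C]_(k, n)) mu : sym_tensor (cubes V mu).
Proof. by move=> a b c; split; apply: eq_bigr => i _; ring. Qed.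

Lemma cubic_form_cubes k n (V : 'M[C]_(k, n)) mu x :
  cubic_form (cubes V mu) x = \sum_(i < k) mu i * ((V *m x) i 0) ^+ 3.
Proof.
rewrite (eq_bigr (fun i => \sum_a \sum_b \sum_c
   mu i * V i a * V i b * V i c * x a 0 * x b 0 * x c 0)) => [|i _]; last first.
  rewrite mxE cube_sum mulr_sumr; apply: eq_bigr => a _.
  rewrite mulr_sumr; apply: eq_bigr => b _.
  by rewrite mulr_sumr; apply: eq_bigr => c _; ring.
rewrite [RHS]exchange_big; apply: eq_bigr => a _.
rewrite [RHS]exchange_big; apply: eq_bigr => b _.
rewrite [RHS]exchange_big; apply: eq_bigr => c _.
by rewrite !mulr_suml.
Qed.

(* OW tensors are exactly the tensors cubes A alpha with A orthogonal: the
   definition only constrains the cubic form, which determines the tensor. *)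
Lemma OW_cubes n (A : 'M[C]_n) alpha (S : tensor3 C n) :
  orthogonal_mx A -> (forall a b c, S a b c = cubes A alpha a b c) -> OW S.
Proof.
move=> orthA SA; split=> [a b c|]; first by rewrite !SA; apply: cubes_sym.
exists A, alpha; split=> // x; rewrite -cubic_form_cubes.
by apply: eq_bigr => a _; apply: eq_bigr => b _; apply: eq_bigr => c _; rewrite SA.
Qed.

Lemma OW_cubesP n (S : tensor3 C n) : OW S ->
  exists A alpha, orthogonal_mx A /\ forall a b c, S a b c = cubes A alpha a b c.
Proof.
case=> symS [A [alpha [orthA SA]]]; exists A, alpha; split=> //.
apply: sym_tensor_cubic_form_inj => // [|x]; first exact: cubes_sym.
by rewrite SA cubic_form_cubes.
Qed.

Lemma cubes_reindex k m n (V : 'M[C]_(k, n)) (A : 'M[C]_(m, n))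
    (f : 'I_k -> 'I_m) mu :
  (forall i, row (f i) A = row i V) ->
  forall a b c, cubes V mu a b c = cubes A (fun j => \sum_(i | f i == j) mu i) a b c.
Proof.
move=> AV a b c.
have VA i d : V i d = A (f i) d.
  by have := congr1 (fun r : 'rV_n => r 0 d) (AV i); rewrite !mxE.
rewrite /cubes (partition_big f xpredT) //; apply: eq_bigr => j _.
rewrite !mulr_suml; apply: eq_bigr => i /eqP <-.
by rewrite !VA.
Qed.

Lemma cubes_scale k n (V W : 'M[C]_(k, n)) (s mu : 'I_k -> C) :
  (forall i a, W i a = s i * V i a) ->
  forall a b c, cubes W mu a b c = cubes V (fun i => mu i * s i ^+ 3) a b c.
Proof. by move=> WV a b c; apply: eq_bigr => i _; rewrite !WV; ring. Qed.

Lemma gram_scale k n (V W : 'M[C]_(k, n)) (s : 'I_k -> C) :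
  (forall i a, W i a = s i * V i a) ->
  forall i j, (W *m W^T) i j = s i * s j * (V *m V^T) i j.
Proof.
move=> WV i j; rewrite !mxE mulr_sumr; apply: eq_bigr => a _.
by rewrite !mxE !WV; ring.
Qed.

(* Pairwise orthogonal rows that are not isotropic are linearly independent:
   the Gram matrix is diagonal and invertible. *)
Lemma orthogonal_rows_free k n (V : 'M[C]_(k, n)) :
  (forall i j, i != j -> (V *m V^T) i j = 0) -> (forall i, (V *m V^T) i i != 0) ->
  row_free V.
Proof.
move=> offdiag diag; set G := V *m V^T.
have G_diag : G = diag_mx (\row_i G i i).
  apply/matrixP => i j; rewrite [in RHS]mxE [in RHS]mxE.
  case: (eqVneq i j) => [->|ij]; first by rewrite mulr1n.
  by rewrite mulr0n; apply: offdiag.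
have G_unit : G \in unitmx.
  by rewrite unitmxE G_diag det_diag unitfE; apply/prodf_neq0 => i _; rewrite mxE.
by apply/row_freeP; exists (V^T *m invmx G); rewrite mulmxA mulmxV.
Qed.

(* P = 1 - Q^T Q is a symmetric idempotent killed by Q with trace
   n - k != 0, so some P_jj != 0 and the j-th row of P, divided by a square
   root of P_jj, is a unit vector orthogonal to the rows of Q. *)
Lemma orthonormal_extend k n (Q : 'M[C]_(k, n)) : Q *m Q^T = 1%:M -> (k < n)%N ->
  exists x : 'rV[C]_n, Q *m x^T = 0 /\ x *m x^T = 1%:M.
Proof.
move=> QQ kn; set P := 1%:M - Q^T *m Q.
have P_sym : P^T = P by rewrite /P linearB /= trmx1 trmx_mul trmxK.
have P_idem : P *m P = P.
  by rewrite /P mulmxBl mul1mx mulmxBr mulmx1 -!mulmxA (mulmxA Q) QQ mul1mx subrr subr0.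
have QP : Q *m P = 0 by rewrite /P mulmxBr mulmx1 mulmxA QQ mul1mx subrr.
have [j Pjj] : exists j, P j j != 0.
  apply/existsP; apply: contraTT (kn) => /existsPn P0.
  have : \tr P = (n - k)%:R.
    by rewrite /P linearB /= mxtrace1 mxtrace_mulC QQ mxtrace1 -natrB // ltnW.
  rewrite /mxtrace big1 => [/esym/eqP|i _]; last exact/eqP/negPn/P0.
  by rewrite pnatr_eq0 subn_eq0 -leqNgt.
pose s := sqrtC (P j j).
have s_neq0 : s != 0 by rewrite sqrtC_eq0.
have s2 : s ^+ 2 = P j j by apply: sqrtCK.
exists (s^-1 *: row j P); split.
  by rewrite linearZ /= -scalemxAr tr_row P_sym colE mulmxA QP mul0mx scaler0.
apply/matrixP => i l; rewrite !ord1 linearZ /= -scalemxAl -scalemxAr scalerA.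
by rewrite [LHS]mxE -bil_mx bil_row P_sym P_idem -s2 mxE eqxx /=; field.
Qed.

Lemma orthonormal_completion k n (Q : 'M[C]_(k, n)) : Q *m Q^T = 1%:M ->
  exists (A : 'M[C]_n) (f : 'I_k -> 'I_n),
    orthogonal_mx A /\ forall i, row (f i) A = row i Q.
Proof.
have [d] := ubnP (n - k); elim: d k Q => // d IH k Q nkd QQ.
have kn : (k <= n)%N.
  have := mxrankM_maxl Q Q^T; rewrite QQ mxrank1 => /leq_trans; apply.
  exact: rank_leq_col.
case: (ltnP k n) => [lt_kn | le_nk].
  have [x [Qx xx]] := orthonormal_extend QQ lt_kn.
  have xQ : x *m Q^T = 0 by rewrite -[LHS]trmxK trmx_mul trmxK Qx trmx0.
  have xQQ : col_mx x Q *m (col_mx x Q)^T = 1%:M.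
    by rewrite tr_col_mx mul_col_row xx Qx xQ QQ -scalar_mx_block.
  have lt_d : (n - (1 + k) < d)%N by lia.
  have [A [f [orthA AQ']]] := IH _ _ lt_d xQQ.
  by exists A, (fun i => f (rshift 1 i)); split=> // i; rewrite AQ' rowKd.
have ekn : k = n by apply/eqP; rewrite eqn_leq kn le_nk.
by subst k; exists Q, id; split=> //; apply: mulmx1C.
Qed.

(* Normalize the vectors, complete them to an
   orthogonal matrix and put coefficient 0 on the added rows. *)
Lemma OW_orthogonal_rows k n (V : 'M[C]_(k, n)) mu :
  (forall i j, i != j -> (V *m V^T) i j = 0) -> (forall i, (V *m V^T) i i != 0) ->
  OW (cubes V mu).
Proof.
move=> offdiag diag.
pose s i := sqrtC ((V *m V^T) i i).
have s_neq0 i : s i != 0 by rewrite sqrtC_eq0.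
have s2 i : s i ^+ 2 = (V *m V^T) i i by apply: sqrtCK.
pose Q := \matrix_(i, a) ((s i)^-1 * V i a).
have QQ : Q *m Q^T = 1%:M.
  apply/matrixP => i j.
  rewrite (gram_scale (s := fun i => (s i)^-1) (V := V)) => [|? ?]; last by rewrite mxE.
  rewrite [RHS]mxE; case: (eqVneq i j) => [<-|ij]; last by rewrite offdiag ?mulr0.
  by rewrite -s2 /=; field.
have [A [f [orthA AQ]]] := orthonormal_completion QQ.
apply: (OW_cubes orthA) => a b c.
rewrite (cubes_scale (s := s) (V := Q)) => [|i a']; last by rewrite mxE mulrA mulfV ?mul1r.
exact: cubes_reindex.
Qed.

(* First inclusion.  Write S = sum_i alpha_i a_i^(x)3 with (a_i) the rows of an
   orthogonal matrix; the vectors alpha_i^(1/3) a_i with alpha_i != 0 are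
   pairwise orthogonal and independent. *)
Lemma OW_SODECO n (S : tensor3 C n) : OW S -> SODECO S.
Proof.
case/OW_cubesP=> A [alpha [orthA SA]].
pose P := [pred i | alpha i != 0].
pose ev := @enum_val _ P.
pose beta i := 3.-root (alpha i).
have beta3 i : beta i ^+ 3 = alpha i by apply: rootCK.
have beta_neq0 r : beta (ev r) != 0.
  by have := enum_valP r; rewrite inE -beta3; apply: contra => /eqP ->; rewrite expr0n.
pose V := \matrix_(r < #|P|, a < n) (beta (ev r) * A (ev r) a).
have gramV r s : (V *m V^T) r s = beta (ev r) * beta (ev s) * (r == s)%:R.
  rewrite (gram_scale (s := beta \o ev) (V := rowsub ev A)) => [|? ?]; last by rewrite !mxE.
  by rewrite -bil_row !row_rowsub bil_row (mulmx1C orthA) mxE (inj_eq enum_val_inj).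
have offdiag r s : r != s -> (V *m V^T) r s = 0.
  by move=> rs; rewrite gramV (negbTE rs) mulr0.
exists #|P|, V; split; [|split].
- by apply: orthogonal_rows_free => // r; rewrite gramV eqxx mulr1 mulf_neq0.
- by move=> r s rs; rewrite bil_row offdiag.
move=> a b c; rewrite SA /cubes (bigID P) /= [X in _ + X]big1 ?addr0 => [|i]; last first.
  by move=> /negPn/eqP ->; rewrite !mul0r.
by rewrite big_enum_val; apply: eq_bigr => r _; rewrite !mxE -beta3; ring.
Qed.

(* A tensor reached at t = 0 by a path of tensors polynomial in t, lying in P
   for every t > 0, is in the closure of P: the error is O(t) uniformly. *)
Lemma eclosure_poly_path n (P : tensor3 C n -> Prop) (S : tensor3 C n)
    (T : C -> tensor3 C n) (p : 'I_n -> 'I_n -> 'I_n -> {poly C}) :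
  (forall t, 0 < t -> P (T t)) ->
  (forall t a b c, 0 < t -> T t a b c = (p a b c).[t]) ->
  (forall a b c, S a b c = (p a b c).[0]) ->
  eclosure P S.
Proof.
move=> PT Tp Sp eps eps_gt0.
pose F (x : 'I_n * 'I_n * 'I_n) := coef_norm (drop_poly 1 (p x.1.1 x.1.2 x.2)).
have F_ge0 x : 0 <= F x by apply: coef_norm_ge0.
have K_ge0 : 0 <= \sum_x F x by apply: sumr_ge0.
have [t [t_gt0 t_le1 tK]] := small_factor eps_gt0 K_ge0.
exists (T t); split=> [|a b c]; first exact: PT.
rewrite Sp Tp // distrC horner_sub0 normrM (gtr0_norm t_gt0) mulrC.
apply: le_lt_trans tK; rewrite ler_pM2l //.
apply: le_trans (ler_sum_term (a, b, c) F_ge0).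
by apply: horner_norm_le; rewrite gtr0_norm.
Qed.

(* Given V of full row rank and a symmetric idempotent E with (V V^T) E = 0,
   there is Z with V Z^T = E and Z Z^T = 0.  With R a right inverse of V and
   Y = E R^T one has V Y^T = E; subtracting N V / 2, N = Y Y^T, makes the
   correction isotropic. *)
Lemma isotropic_correction k n (V : 'M[C]_(k, n)) (E : 'M[C]_k) :
  row_free V -> E^T = E -> E *m E = E -> (V *m V^T) *m E = 0 ->
  exists Z : 'M[C]_(k, n), V *m Z^T = E /\ Z *m Z^T = 0.
Proof.
move=> /row_freeP[R VR] E_sym E_idem GE.
pose Y := E *m R^T; pose N := Y *m Y^T.
have VY : V *m Y^T = E by rewrite trmx_mul trmxK E_sym mulmxA VR mul1mx.
have YV : Y *m V^T = E by rewrite -[LHS]trmxK trmx_mul trmxK VY E_sym.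
have N_sym : N^T = N by rewrite trmx_mul trmxK.
have EN : E *m N = N by rewrite /N /Y !mulmxA E_idem.
have NE : N *m E = N by rewrite -[LHS]trmxK trmx_mul N_sym E_sym EN.
have GN : (V *m V^T) *m N = 0 by rewrite /N /Y !mulmxA GE !mul0mx.
pose Z := Y - 2%:R^-1 *: (N *m V).
have ZT : Z^T = Y^T - 2%:R^-1 *: (V^T *m N).
  by rewrite linearB /= linearZ /= (trmx_mul N V) N_sym.
have VZ : V *m Z^T = E.
  by rewrite ZT mulmxBr -scalemxAr mulmxA GN scaler0 subr0 VY.
exists Z; split=> //.
rewrite {1}/Z mulmxBl -scalemxAl -(mulmxA N V) VZ NE.
rewrite ZT mulmxBr -scalemxAr (mulmxA Y) YV EN.
rewrite -/N -{1}[N]scale1r -!scalerBl.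
have -> : 1 - 2%:R^-1 - 2%:R^-1 = 0 :> C by field.
by rewrite scale0r.
Qed.

Lemma gram_perturb k n (V Z : 'M[C]_(k, n)) (E : 'M[C]_k) t :
  V *m Z^T = E -> Z *m Z^T = 0 -> E^T = E ->
  (V + t *: Z) *m (V + t *: Z)^T = V *m V^T + (2%:R * t) *: E.
Proof.
move=> VZ ZZ E_sym.
have ZV : Z *m V^T = E by rewrite -[LHS]trmxK trmx_mul trmxK VZ E_sym.
rewrite linearD /= linearZ /= mulmxDl !mulmxDr -!scalemxAl -!scalemxAr VZ ZV ZZ.
by rewrite !scaler0 addr0 -addrA -scalerDl mulr_natl mulr2n.
Qed.

(* Let S = sum_i v_i^(x)3 with orthogonal independent v_i and
   let E be the diagonal projection onto the isotropic v_i.  Perturbing V to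
   V + t Z as above keeps the rows orthogonal and makes every row
   non-isotropic for t > 0, so cubes (V + t Z) is in OW and tends to S. *)
Lemma SODECO_closure n (S : tensor3 C n) : SODECO S -> eclosure (@OW C n) S.
Proof.
case=> k [V [freeV [orthV SV]]].
have [G VG] : exists G, V *m V^T = G by exists (V *m V^T).
have G_offdiag i j : i != j -> G i j = 0 by move=> ij; rewrite -VG -bil_row orthV.
pose E := diag_mx (\row_i (G i i == 0)%:R : 'rV[C]_k).
have E_sym : E^T = E by apply: tr_diag_mx.
have [Z [VZ ZZ]] : exists Z, V *m Z^T = E /\ Z *m Z^T = 0.
  apply: isotropic_correction; rewrite ?VG //.
    rewrite mulmx_diag; congr diag_mx; apply/rowP => i; rewrite !mxE.
    by case: (_ == 0); rewrite ?mulr1 ?mulr0.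
  apply/matrixP => i j; rewrite mul_mx_diag !mxE.
  case: (eqVneq i j) => [<-|ij]; last by rewrite G_offdiag ?mul0r.
  by case: eqP => [->|]; rewrite ?mul0r ?mulr0.
pose p a b c := \sum_(i < k) ((V i a)%:P + 'X * (Z i a)%:P)
  * ((V i b)%:P + 'X * (Z i b)%:P) * ((V i c)%:P + 'X * (Z i c)%:P).
apply: (@eclosure_poly_path _ _ _ (fun t => cubes (V + t *: Z) (fun=> 1)) p).
- move=> t t_gt0; apply: OW_orthogonal_rows => [i j ij|i];
    rewrite (gram_perturb t VZ ZZ E_sym) VG !mxE.
    by rewrite (G_offdiag i j ij) (negbTE ij) mulr0n mulr0 addr0.
  rewrite eqxx mulr1n; case: (eqVneq (G i i) 0) => [->|G_neq0].
    by rewrite add0r mulr1 mulf_neq0 ?pnatr_eq0 ?gt_eqF.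
  by rewrite mulr0 addr0.
- by move=> t a b c _; rewrite horner_sum; apply: eq_bigr => i _; rewrite !hornerE !mxE.
- by move=> a b c; rewrite SV horner_sum; apply: eq_bigr => i _; rewrite !hornerE.
Qed.

Definition contraction n (S : tensor3 C n) (a : 'I_n) : C := \sum_(b < n) S a b b.

Lemma contraction_cubes k n (V : 'M[C]_(k, n)) mu a :
  contraction (cubes V mu) a = \sum_(i < k) mu i * (V *m V^T) i i * V i a.
Proof.
rewrite /contraction /cubes exchange_big; apply: eq_bigr => i _.
by rewrite mxE mulr_sumr mulr_suml; apply: eq_bigr => b _; rewrite mxE; ring.
Qed.

(* An OW tensor with zero contraction is zero: for S = cubes A alpha with A
   orthogonal the contraction is alpha^T A, and A is invertible. *)
Lemma OW_contraction_eq0 n (S : tensor3 C n) :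
  OW S -> (forall a, contraction S a = 0) -> forall a b c, S a b c = 0.
Proof.
case/OW_cubesP=> A [alpha [orthA SA]] S0.
have AAT := mulmx1C orthA.
have alphaA : (\row_i alpha i) *m A = 0.
  apply/rowP => a; rewrite [RHS]mxE -[RHS](S0 a) mxE.
  have -> : contraction S a = contraction (cubes A alpha) a.
    by apply: eq_bigr => b _; rewrite SA.
  by rewrite contraction_cubes AAT; apply: eq_bigr => i _; rewrite !mxE eqxx mulr1.
have alpha0 : \row_i alpha i = 0 by rewrite -[LHS]mulmx1 -AAT mulmxA alphaA mul0mx.
move=> a b c; rewrite SA; apply: big1 => i _.
by have := congr1 (fun r : 'rV_n => r 0 i) alpha0; rewrite !mxE => ->; rewrite !mul0r.
Qed.

Section OrthogonalCubes.

Variables (k n : nat) (V : 'M[C]_(k, n)) (S : tensor3 C n).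
Hypothesis V_orth : forall i j, i != j -> (V *m V^T) i j = 0.
Hypothesis SV : forall a b c, S a b c = \sum_(i < k) V i a * V i b * V i c.

Lemma contraction_orthogonal a : contraction S a = \sum_i (V *m V^T) i i * V i a.
Proof.
have -> : contraction S a = contraction (cubes V (fun=> 1)) a.
  by apply: eq_bigr => b _; rewrite SV; apply: eq_bigr => i _; rewrite mul1r.
by rewrite contraction_cubes; apply: eq_bigr => i _; rewrite mul1r.
Qed.

Lemma row_contraction i : \sum_a V i a * contraction S a = (V *m V^T) i i ^+ 2.
Proof.
have [G VG] : exists G, V *m V^T = G by exists (V *m V^T).
have VV j : \sum_a V i a * V j a = G i j.
  by rewrite -VG mxE; apply: eq_bigr => a _; rewrite mxE.
rewrite (eq_bigr (fun a => \sum_j G j j * (V i a * V j a))) => [|a _]; last first.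
  by rewrite contraction_orthogonal VG mulr_sumr; apply: eq_bigr => j _; ring.
rewrite exchange_big (eq_bigr (fun j => G j j * G i j)) => [|j _]; last first.
  by rewrite -mulr_sumr VV.
rewrite VG (bigD1 i) //= big1 ?addr0 => [|j ji]; first by rewrite expr2.
by rewrite -VG (@V_orth i j) ?mulr0 // eq_sym.
Qed.

Lemma double_contraction b :
  \sum_a \sum_d S a b d * contraction S a * contraction S d
    = \sum_i (V *m V^T) i i ^+ 4 * V i b.
Proof.
transitivity (\sum_i V i b * (\sum_a V i a * contraction S a)
                          * (\sum_d V i d * contraction S d)); last first.
  by apply: eq_bigr => i _; rewrite row_contraction; ring.
transitivity (\sum_a \sum_d \sum_i
    V i b * (V i a * contraction S a) * (V i d * contraction S d)).
  apply: eq_bigr => a _; apply: eq_bigr => d _.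
  by rewrite SV !mulr_suml; apply: eq_bigr => i _; ring.
under eq_bigr => a _ do rewrite exchange_big.
rewrite exchange_big; apply: eq_bigr => i _.
rewrite [RHS]mulr_sumr exchange_big; apply: eq_bigr => d _.
by rewrite mulr_sumr mulr_suml.
Qed.

End OrthogonalCubes.

(* In SODECO, a vanishing double contraction S(phi, ., phi) forces phi = 0:
   it equals sum_i lambda_i^4 v_i and the v_i are independent. *)
Lemma SODECO_contraction n (S : tensor3 C n) : SODECO S ->
  (forall b, \sum_a \sum_d S a b d * contraction S a * contraction S d = 0) ->
  forall a, contraction S a = 0.
Proof.
case=> k [V [freeV [orthV SV]]] psi0.
have V_orth i j : i != j -> (V *m V^T) i j = 0 by move=> ij; rewrite -bil_row orthV.
have [G VG] : exists G, V *m V^T = G by exists (V *m V^T).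
have G0 i : G i i = 0.
  have : (\row_j G j j ^+ 4) *m V = 0 *m V.
    apply/rowP => b; rewrite mul0mx [RHS]mxE -[RHS](psi0 b).
    rewrite (double_contraction V_orth SV) VG mxE.
    by apply: eq_bigr => j _; rewrite mxE.
  move/(row_free_inj freeV)/rowP/(_ i); rewrite !mxE => /eqP.
  by rewrite expf_eq0 => /andP[_ /eqP].
by move=> a; rewrite (contraction_orthogonal SV) VG big1 // => i _; rewrite G0 mul0r.
Qed.

Definition cube_tensor n (w : 'rV[C]_n) : tensor3 C n :=
  fun a b c => w 0 a * w 0 b * w 0 c.

Lemma cube_tensor_SODECO n (w : 'rV[C]_n) : w != 0 -> SODECO (cube_tensor w).
Proof.
move=> w_neq0; exists 1%N, w; split; [|split].
- by rewrite /row_free rank_rV w_neq0.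
- by move=> i j; rewrite !ord1 eqxx.
- by move=> a b c; rewrite big_ord1.
Qed.

Lemma cube_tensor_not_OW n (w : 'rV[C]_n) a0 :
  bil w w = 0 -> w 0 a0 != 0 -> ~ OW (cube_tensor w).
Proof.
move=> ww wa0 OWw.
have contraction0 a : contraction (cube_tensor w) a = 0.
  rewrite /contraction (eq_bigr (fun b => w 0 a * (w 0 b * w 0 b))) => [|b _].
    by rewrite -mulr_sumr -/(bil w w) ww mulr0.
  by rewrite /cube_tensor mulrA.
have /eqP := OW_contraction_eq0 OWw contraction0 a0 a0 a0.
by rewrite !mulf_eq0 (negbTE wa0).
Qed.

Definition sym3 n (w u : 'rV[C]_n) : tensor3 C n := fun a b c =>
  w 0 a * w 0 b * u 0 c + w 0 a * u 0 b * w 0 c + u 0 a * w 0 b * w 0 c.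

Lemma sym3_contraction n (w u : 'rV[C]_n) a :
  bil w w = 0 -> contraction (sym3 w u) a = 2%:R * bil w u * w 0 a.
Proof.
move=> ww; rewrite /contraction (eq_bigr (fun b => w 0 a * (w 0 b * u 0 b)
  + w 0 a * (u 0 b * w 0 b) + u 0 a * (w 0 b * w 0 b))) => [|b _]; last first.
  by rewrite /sym3; ring.
rewrite !big_split /= -!mulr_sumr -/(bil w u) -/(bil u w) -/(bil w w) (bilC u w) ww.
by rewrite mulr0 addr0 mulr_natl mulr2n; ring.
Qed.

Lemma sym3_double_contraction n (w u : 'rV[C]_n) b : bil w w = 0 ->
  \sum_a \sum_d sym3 w u a b d * w 0 a * w 0 d = 0.
Proof.
move=> ww; rewrite (eq_bigr (fun a => w 0 a * w 0 a * w 0 b * bil u w)) => [|a _].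
  by rewrite -!mulr_suml -/(bil w w) ww !mul0r.
rewrite (eq_bigr (fun d => w 0 a * w 0 a * w 0 b * (u 0 d * w 0 d)
  + (w 0 a * w 0 a * u 0 b + w 0 a * u 0 a * w 0 b) * (w 0 d * w 0 d))) => [|d _].
  by rewrite big_split /= -!mulr_sumr -/(bil u w) -/(bil w w) ww mulr0 addr0.
by rewrite /sym3; ring.
Qed.

(* sym3 w u is not in SODECO: its contraction 2<w,u> w is nonzero while its
   double contraction vanishes. *)
Lemma sym3_not_SODECO n (w u : 'rV[C]_n) a0 :
  bil w w = 0 -> bil w u != 0 -> w 0 a0 != 0 -> ~ SODECO (sym3 w u).
Proof.
move=> ww wu wa0 /SODECO_contraction contraction0.
have psi0 b : \sum_a \sum_d sym3 w u a b d
    * contraction (sym3 w u) a * contraction (sym3 w u) d = 0.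
  rewrite -[RHS](mulr0 ((2%:R * bil w u) ^+ 2)).
  rewrite -[in RHS](sym3_double_contraction u b ww).
  rewrite mulr_sumr; apply: eq_bigr => a _; rewrite mulr_sumr; apply: eq_bigr => d _.
  by rewrite !sym3_contraction //; ring.
have /eqP := contraction0 psi0 a0.
by rewrite sym3_contraction // !mulf_eq0 pnatr_eq0 (negbTE wu) (negbTE wa0).
Qed.

(* sym3 w u = ((w + t u)^(x)3 - (w - t u)^(x)3) / (2t) - t^2 u^(x)3, and w + t u,
   w - t u are orthogonal and non-isotropic for t > 0. *)
Lemma sym3_closure n (w u : 'rV[C]_n) :
  bil w w = 0 -> bil u u = 0 -> bil w u != 0 -> eclosure (@OW C n) (sym3 w u).
Proof.
move=> ww uu wu.
pose sgn (i : 'I_2) : C := (-1) ^+ i.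
have sgn_opp (i j : 'I_2) : i != j -> sgn i + sgn j = 0.
  case: i j => [[|[|//]] ?] [[|[|//]] ?] //= _;
    by rewrite /sgn /= expr0 expr1 ?addrN ?addNr.
pose V t := \matrix_(i < 2, a < n) (w 0 a + sgn i * t * u 0 a).
have gramV t i j : (V t *m (V t)^T) i j = (sgn i + sgn j) * t * bil w u.
  have rowV k : row k (V t) = w + (sgn k * t) *: u by apply/rowP => a; rewrite !mxE.
  rewrite -bil_row !rowV !(bilDl, bilDr, bilZl, bilZr) ww uu (bilC u w); ring.
pose mu t (i : 'I_2) := sgn i / (2%:R * t).
pose p a b c := (sym3 w u a b c)%:P + 'X^2 * (u 0 a * u 0 b * u 0 c)%:P.
apply: (@eclosure_poly_path _ _ _ (fun t => cubes (V t) (mu t)) p).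
- move=> t t_gt0; apply: OW_orthogonal_rows => [i j ij|i]; rewrite gramV.
    by rewrite sgn_opp // !mul0r.
  rewrite -mulr2n -mulr_natl /sgn !mulf_eq0 pnatr_eq0 signr_eq0.
  by rewrite (gt_eqF t_gt0) (negbTE wu).
- move=> t a b c t_gt0; rewrite /cubes !big_ord_recl big_ord0 !mxE /mu /sgn /=.
  rewrite /bump /= expr1 !hornerE /sym3 /= addr0.
  by field; rewrite gt_eqF.
- by move=> a b c; rewrite !hornerE /= expr0n !mul0r addr0.
Qed.

Lemma isotropic_pair n : (2 <= n)%N -> exists (w u : 'rV[C]_n) (a0 : 'I_n),
  [/\ bil w w = 0, bil u u = 0, bil w u != 0 & w 0 a0 != 0].
Proof.
case: n => [|[|n]] // _.
pose e (a : 'I_n.+2) : 'rV[C]_n.+2 := delta_mx 0 a.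
have e01 : bil (e 0) (e 1) = 0 by rewrite bil_delta eq_sym oner_eq0.
have e10 : bil (e 1) (e 0) = 0 by rewrite bil_delta oner_eq0.
have e00 : bil (e 0) (e 0) = 1 by rewrite bil_delta eqxx.
have e11 : bil (e 1) (e 1) = 1 by rewrite bil_delta eqxx.
have i2 : 1 + 'i ^+ 2 = 0 :> C by rewrite sqrCi subrr.
exists (e 0 + 'i *: e 1), (e 0 + (- 'i) *: e 1), 0.
rewrite !(bilDl, bilDr, bilZl, bilZr) e01 e10 e00 e11; split.
- by rewrite -[RHS]i2; ring.
- by rewrite -[RHS]i2; ring.
- rewrite (_ : _ + _ = 1 + 1 - (1 + 'i ^+ 2)); last by ring.
  by rewrite i2 subr0 -mulr2n pnatr_eq0.
- by rewrite !mxE eqxx mulr0 addr0 oner_eq0.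
Qed.

End OrthogonalDecompositions.

Unset Implicit Arguments.

Theorem theorem17 (C : numClosedFieldType) (n : nat) (hn : (1 <= n)%N) :
  ((forall S : tensor3 C n, OW S -> SODECO S) /\
   (forall S : tensor3 C n, SODECO S -> eclosure (@OW C n) S)) /\
  ((2 <= n)%N ->
   (exists S : tensor3 C n, SODECO S /\ ~ OW S) /\
   (exists S : tensor3 C n, eclosure (@OW C n) S /\ ~ SODECO S)).
Proof.
split; first by split=> S; [apply: OW_SODECO | apply: SODECO_closure].
move=> n2; have [w [u [a0 [ww uu wu wa0]]]] := isotropic_pair C n2.
split.
  exists (cube_tensor w); split; last exact: cube_tensor_not_OW ww wa0.
  by apply: cube_tensor_SODECO; apply: contraNneq wa0 => ->; rewrite mxE.
exists (sym3 w u); split; first exact: sym3_closure.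
exact: sym3_not_SODECO ww wu wa0.
Qed.
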